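(* Let $A$ be a commutative ring. For $X\in B$ and $a_1,\ldots,a_n\in A$ ($n\ge0$) with $E(a_n)\cdots E(a_1)\in B$, let $\langle X,(a_1,\ldots,a_n)\rangle$ denote the class in the edge-path group $\pi_1(Y(A),\infty)$ of the edge loop $(\infty\cdot X,\ \infty\cdot E(a_1)X,\ \infty\cdot E(a_2)E(a_1)X,\ldots,\ \infty\cdot E(a_n)\cdots E(a_1)X)$; write $\langle X\rangle$ when $n=0$, and $T(p):=E(a_n)\cdots E(a_1)X$ for $p=\langle X,(a_1,\ldots,a_n)\rangle$. Then $\pi_1(Y(A),\infty)$ is generated by these symbols, and the following families form a complete set of defining relations: (1) For $p=\langle X,(a_1,\ldots,a_n)\rangle$ and $q=\langle Y,(b_1,\ldots,b_m)\rangle$: $p\cdot q=\langle X,(a_1,\ldots,a_n,b'_1,\ldots,b'_m)\rangle$, where $Z:=YX^{-1}E(a_1)^{-1}\cdots E(a_n)^{-1}=\begin{pmatrix}u&0\\c&u^{-1}\end{pmatrix}\in B$, $b'_1=u^2b_1+cu$, and $b'_j=u^{2(-1)^{j-1}}b_j$ for $j\ge2$. (2) $\langle X\rangle=1$ for all $X\in B$. (3) $\langle X,(a_1,\ldots,a_{n-1},0)\rangle=\langle X,(a_1,\ldots,a_{n-2})\rangle$ and $\langle X,(a_1,\ldots,a_i,0,a_{i+2},\ldots,a_n)\rangle=\langle X,(a_1,\ldots,a_{i-1},a_i+a_{i+2},a_{i+3},\ldots,a_n)\rangle$. (4) For $u\in A^\times$: $\langle X,(a_1,\ldots,a_{n-1},u)\rangle=\langle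 X,(a_1,\ldots,a_{n-2},a_{n-1}-u^{-1})\rangle$ and $\langle X,(a_1,\ldots,a_i,u,a_{i+2},a_{i+3},a_{i+4},\ldots)\rangle=\langle X,(a_1,\ldots,a_{i-1},a_i-u^{-1},u^2a_{i+2}-u,u^{-2}a_{i+3},u^2a_{i+4},\ldots)\rangle$ (subsequent entries multiplied alternately by $u^{-2}$ and $u^{2}$).
   Context: A unimodular row over $A$ is $(a,b)\in A^2$ with $aA+bA=A$. $\Gamma(A)$ is the graph whose vertices are classes of unimodular rows modulo multiplication by units, with $\{[u],[v]\}$ an edge iff the matrix with rows $u,v$ lies in $\mathrm{GL}_2(A)$; $Y(A)$ is its clique complex. $\mathrm{SL}_2(A)$ acts on vertices on the right by $[u]\cdot M=[uM]$; $\infty=[(1,0)]$. $E(a)=\begin{pmatrix}a&1\\-1&0\end{pmatrix}$. $B$ is the group of lower triangular matrices in $\mathrm{SL}_2(A)$ (the stabilizer of $\infty$). The edge-path group $\pi_1(Y(A),\infty)$ consists of edge loops at $\infty$ (sequences of vertices, consecutive ones adjacent, beginning and ending at $\infty$) modulo the equivalence generated by deleting $x_{i+1},x_{i+2}$ when $x_i=x_{i+2}$ and deleting $x_{i+1}$ when $\{x_i,x_{i+1},x_{i+2}\}$ is a 2-simplex; the product is concatenation. *)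

From HB Require Import structures.
From mathcomp Require Import all_boot all_order all_algebra.
From Stdlib Require Import Relations.
Set Implicit Arguments. Unset Strict Implicit. Unset Printing Implicit Defensive.
Import GRing.Theory.
Local Open Scope ring_scope.

Section SL2.
Variable A : comUnitRingType.

Definition i0 : 'I_2 := @ord0 1.
Definition i1 : 'I_2 := @ord_max 1.

Definition Emx (a : A) : 'M[A]_2 :=
  \matrix_(i < 2, j < 2)
    (if i == i0 then (if j == i0 then a else 1) else (if j == i0 then -1 else 0)).

Definition inB (X : 'M[A]_2) : bool := (X i0 i1 == 0) && (\det X == 1).

(* E(a_n) ... E(a_1) for as = [:: a_1; ...; a_n] *)
Definition Eprod (s : seq A) : 'M[A]_2 := foldl (fun M a => Emx a *m M) 1%:M s.
Definition Tmat (X : 'M[A]_2) (s : seq A) : 'M[A]_2 := Eprod s *m X.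

Definition inf_row : 'rV[A]_2 := \row_(j < 2) (if j == i0 then 1 else 0).
Definition act (u : 'rV[A]_2) (M : 'M[A]_2) : 'rV[A]_2 := u *m M.
Definition unimodular (u : 'rV[A]_2) : Prop :=
  exists x y : A, u 0 i0 * x + u 0 i1 * y = 1.
(* same vertex: equal modulo multiplication by a unit *)
Definition rows_equiv (u v : 'rV[A]_2) : Prop :=
  exists2 l : A, l \is a GRing.unit & v = l *: u.
Definition rows2 (u v : 'rV[A]_2) : 'M[A]_2 :=
  \matrix_(i < 2, j < 2) (if i == i0 then u 0 j else v 0 j).
(* edge of Gamma(A): the matrix with rows u, v lies in GL_2(A) *)
Definition adjacent (u v : 'rV[A]_2) : bool := \det (rows2 u v) \is a GRing.unit.

(* edge loops at infinity, vertices given by unimodular representatives *)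
Definition is_loop (s : seq 'rV[A]_2) : Prop :=
  exists x0 s', s = x0 :: s' /\ rows_equiv x0 inf_row /\
    rows_equiv (last x0 s') inf_row /\
    (forall x, x \in s -> unimodular x) /\ path adjacent x0 s'.

Inductive loop_move : seq 'rV[A]_2 -> seq 'rV[A]_2 -> Prop :=
| lm_rep l r x y : rows_equiv x y -> loop_move (l ++ x :: r) (l ++ y :: r)
| lm_back l r x y z : rows_equiv x z ->
    loop_move (l ++ [:: x; y; z] ++ r) (l ++ [:: x] ++ r)
| lm_simplex l r x y z : adjacent x y -> adjacent y z -> adjacent x z ->
    loop_move (l ++ [:: x; y; z] ++ r) (l ++ [:: x; z] ++ r).

Definition loop_step (s t : seq 'rV[A]_2) : Prop :=
  [/\ is_loop s, is_loop t & loop_move s t].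

(* equality in the edge-path group pi_1(Y(A), infinity) *)
Definition loop_equiv : relation (seq 'rV[A]_2) := clos_refl_sym_trans _ loop_step.

Definition cat_loop (s t : seq 'rV[A]_2) := s ++ behead t.

Definition symbol := ('M[A]_2 * seq A)%type.
Definition valid_sym (p : symbol) : bool := inB p.1 && inB (Eprod p.2).
Definition sym_loop (p : symbol) : seq 'rV[A]_2 :=
  [seq act inf_row M | M <- p.1 :: scanl (fun M a => Emx a *m M) p.1 p.2].

(* words in the symbols and their inverses: (true,p) = p, (false,p) = p^-1 *)
Definition word := seq (bool * symbol).
Definition valid_word (w : word) : bool := all (fun x => valid_sym x.2) w.
Definition letter_loop (x : bool * symbol) :=
  if x.1 then sym_loop x.2 else rev (sym_loop x.2).
Definition eval_word (w : word) : seq 'rV[A]_2 :=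
  foldr (fun x l => cat_loop (letter_loop x) l) [:: inf_row] w.

Fixpoint alt (e : bool) (u : A) (s : seq A) : seq A :=
  if s is b :: s' then ((if e then u ^+ 2 else u ^- 2) * b) :: alt (~~ e) u s'
  else [::].

Definition Zmat (Y X : 'M[A]_2) (s : seq A) : 'M[A]_2 :=
  foldl (fun M a => M *m invmx (Emx a)) (Y *m invmx X) s.

Definition bprime (Z : 'M[A]_2) (s : seq A) : seq A :=
  let u := Z i0 i0 in let c := Z i1 i0 in
  if s is b1 :: s' then (u ^+ 2 * b1 + c * u) :: alt false u s' else [::].

Definition pos (p : symbol) : bool * symbol := (true, p).

Inductive rel_pair : word -> word -> Prop :=
| rp_cancel b p : valid_sym p -> rel_pair [:: (b, p); (~~ b, p)] [::]
| rp_mul X s Y t : valid_sym (X, s) -> valid_sym (Y, t) ->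
    rel_pair [:: pos (X, s); pos (Y, t)] [:: pos (X, s ++ bprime (Zmat Y X s) t)]
| rp_triv X : inB X -> rel_pair [:: pos (X, [::])] [::]
| rp_zero_end X s a : valid_sym (X, s ++ [:: a; 0]) ->
    rel_pair [:: pos (X, s ++ [:: a; 0])] [:: pos (X, s)]
| rp_zero_mid X s a b t : valid_sym (X, s ++ [:: a; 0; b] ++ t) ->
    rel_pair [:: pos (X, s ++ [:: a; 0; b] ++ t)] [:: pos (X, s ++ [:: a + b] ++ t)]
| rp_unit_end X s a u : u \is a GRing.unit -> valid_sym (X, s ++ [:: a; u]) ->
    rel_pair [:: pos (X, s ++ [:: a; u])] [:: pos (X, s ++ [:: a - u^-1])]
| rp_unit_mid X s a u b t : u \is a GRing.unit -> valid_sym (X, s ++ [:: a; u; b] ++ t) ->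
    rel_pair [:: pos (X, s ++ [:: a; u; b] ++ t)]
             [:: pos (X, s ++ [:: a - u^-1; u ^+ 2 * b - u] ++ alt false u t)].

Definition word_step (w w' : word) : Prop :=
  exists l r u v, rel_pair u v /\ w = l ++ u ++ r /\ w' = l ++ v ++ r.

(* equality in the group presented by the symbols and relations (1)-(4) *)
Definition word_equiv : relation word := clos_refl_sym_trans _ word_step.

End SL2.

(* Read from a frame [M], a vertex adjacent to [oo . M] is [oo . E(a) M] for a
   unique [a] (up to a unit), so an edge path from [oo . M] is the path of a
   unique coefficient sequence.  For an edge loop at [oo] read from [1] this
   gives its normal symbol [<1, (a_1, ..., a_n)>], whose loop has the same
   vertices.  Reading from [M] a path that starts at [oo . Z M] with [Z] in [B]
   transforms the coefficients by the rule [b'] of relation (1), because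
   [E(b) Z = diag(Z_11, Z_00) E(Z_00^2 b + Z_10 Z_00)]; hence relation (1)
   describes concatenation of loops, and the inverse of a symbol is
   represented by the reversed loop.  A backtrack [x, y, x] inside a loop shows up as a
   coefficient [0] and a triangle as a unit coefficient, and the normal
   symbols before and after such a move differ by relation (3) or (4);
   conversely every relation is one move plus a change of representatives.
   So [w |-> loop of w] and [s |-> normal symbol of s] are mutually inverse
   on equivalence classes. *)

From HB Require Import structures.
From mathcomp Require Import all_boot all_order all_algebra.
From mathcomp Require Import ring.
From Stdlib Require Import Relations.
From Stdlib Require List.
Import List (Forall2(..)).
Set Implicit Arguments. Unset Strict Implicit. Unset Printing Implicit Defensive.
Import GRing.Theory.
Local Open Scope ring_scope.

Section Forall2Seq.
Variables (T : Type) (R : T -> T -> Prop).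
Implicit Types s t : seq T.

Lemma Forall2_refl s : (forall x, R x x) -> Forall2 R s s.
Proof. by move=> Rxx; elim: s => [|x s IH]; constructor. Qed.

Lemma Forall2_sym s t : (forall x y, R x y -> R y x) -> Forall2 R s t -> Forall2 R t s.
Proof. by move=> Rsym; elim=> [|x y s' t' Rxy _ IH]; constructor; auto. Qed.

Lemma Forall2_trans s t r : (forall x y z, R x y -> R y z -> R x z) ->
  Forall2 R s t -> Forall2 R t r -> Forall2 R s r.
Proof.
move=> Rtr st; elim: st r => [|x y s' t' Rxy _ IH] r tr; inversion tr; constructor; eauto.
Qed.

Lemma Forall2_cat s t s' t' : Forall2 R s t -> Forall2 R s' t' -> Forall2 R (s ++ s') (t ++ t').
Proof. by elim=> //= x y s1 t1 Rxy _ IH st'; constructor; last exact: IH. Qed.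

Lemma Forall2_last s t x y : R x y -> Forall2 R s t -> R (last x s) (last y t).
Proof. by move=> Rxy st; elim: st x y Rxy => //= x' y' s' t' Rxy' _ IH x y _; apply: IH. Qed.

Lemma Forall2_map (U : Type) (R' : U -> U -> Prop) (f : T -> U) s t :
  (forall x y, R x y -> R' (f x) (f y)) -> Forall2 R s t -> Forall2 R' (map f s) (map f t).
Proof. by move=> Rf; elim=> /= [|x y s' t' Rxy _ IH]; constructor; auto. Qed.

Lemma Forall2_consE x y s t : Forall2 R (x :: s) (y :: t) -> R x y /\ Forall2 R s t.
Proof. by move=> xyst; inversion xyst. Qed.

End Forall2Seq.

Arguments Forall2_consE {T R x y s t}.

Lemma rev_lastI (T : Type) (x0 : T) s : rev (x0 :: s) = last x0 s :: rev (belast x0 s).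
Proof. by rewrite lastI rev_rcons. Qed.

Section Presentation.
Variable A : comUnitRingType.
Implicit Types (a b c u : A) (s : seq A) (x y z : 'rV[A]_2) (xs ys : seq 'rV[A]_2)
  (p q : symbol A) (w : word A) (M N X Y Z D T : 'M[A]_2).

Definition mx2 (a b c d : A) : 'M[A]_2 :=
  \matrix_(i, j) (if i == i0 then (if j == i0 then a else b) else (if j == i0 then c else d)).

Lemma ord2P (j : 'I_2) : j = i0 \/ j = i1.
Proof. by case: j => [[|[|n]] lt_j2]; [left|right|]; try exact: val_inj. Qed.

Lemma mx2_00 a b c d : mx2 a b c d i0 i0 = a. Proof. by rewrite mxE. Qed.
Lemma mx2_01 a b c d : mx2 a b c d i0 i1 = b. Proof. by rewrite mxE. Qed.
Lemma mx2_10 a b c d : mx2 a b c d i1 i0 = c. Proof. by rewrite mxE. Qed.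
Lemma mx2_11 a b c d : mx2 a b c d i1 i1 = d. Proof. by rewrite mxE. Qed.
Definition mx2E := (mx2_00, mx2_01, mx2_10, mx2_11).

Lemma mx2_eta M : M = mx2 (M i0 i0) (M i0 i1) (M i1 i0) (M i1 i1).
Proof.
by apply/matrixP => i j; rewrite mxE; case: (ord2P i) => ->; case: (ord2P j) => ->.
Qed.

Lemma mx2_1 : 1%:M = mx2 1 0 0 1.
Proof. by rewrite [LHS]mx2_eta !mxE. Qed.

Lemma mulmx2E m n (P : 'M[A]_(m, 2)) (Q : 'M[A]_(2, n)) i j :
  (P *m Q) i j = P i i0 * Q i0 j + P i i1 * Q i1 j.
Proof.
rewrite mxE !big_ord_recl big_ord0 addr0.
by congr (_ * _ + _ * _); congr (_ _ _); apply: val_inj.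
Qed.

Lemma mulmx2 a b c d a' b' c' d' :
  mx2 a b c d *m mx2 a' b' c' d' =
  mx2 (a * a' + b * c') (a * b' + b * d') (c * a' + d * c') (c * b' + d * d').
Proof. by rewrite [LHS]mx2_eta !mulmx2E !mx2E. Qed.

Lemma det_mx2 M : \det M = M i0 i0 * M i1 i1 - M i0 i1 * M i1 i0.
Proof.
rewrite (expand_det_row _ i0) !big_ord_recl big_ord0 addr0 /cofactor.
rewrite [row' _ _]mx11_scalar [row' _ (col' _ M)]mx11_scalar !det_mx11 !mxE.
have -> : lift i0 0 = i1 by apply: val_inj.
have -> : (ord0 : 'I_2) = i0 by apply: val_inj.
have -> : lift i1 0 = i0 by apply: val_inj.
by rewrite !eqxx /=; ring.
Qed.

Lemma EmxE a : Emx a = mx2 a 1 (-1) 0. Proof. by []. Qed.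

Lemma det_Emx a : \det (Emx a) = 1.
Proof. by rewrite det_mx2 EmxE !mx2E mulr0 mul1r opprK add0r. Qed.

Lemma Emx_unitmx a : Emx a \in unitmx.
Proof. by rewrite unitmxE det_Emx unitr1. Qed.

(** * The Borel subgroup *)

Lemma inBE Z : inB Z = (Z i0 i1 == 0) && (Z i0 i0 * Z i1 i1 == 1).
Proof. by rewrite /inB det_mx2; case: eqP => // ->; rewrite mul0r subr0. Qed.

Lemma inB_mx2 a c d : inB (mx2 a 0 c d) = (a * d == 1).
Proof. by rewrite inBE !mx2E eqxx. Qed.

Lemma inB1 : inB (1%:M : 'M[A]_2).
Proof. by rewrite /inB det1 !mxE !eqxx. Qed.

Lemma inB_unit00 Z : inB Z -> Z i0 i0 \is a GRing.unit.
Proof. by rewrite inBE => /andP[_ /eqP Z00Z11]; apply/unitrPr; exists (Z i1 i1). Qed.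

Lemma inB_inv00 Z : inB Z -> (Z i0 i0)^-1 = Z i1 i1.
Proof. by rewrite inBE => /andP[_ /eqP Z00Z11]; apply: mulr1_eq. Qed.

Lemma inB_unitmx Z : inB Z -> Z \in unitmx.
Proof. by case/andP => _ /eqP detZ; rewrite unitmxE detZ unitr1. Qed.

Lemma inB_mul X Y : inB X -> inB Y -> inB (X *m Y).
Proof.
move=> /andP[/eqP X01 /eqP detX] /andP[/eqP Y01 /eqP detY].
by rewrite /inB det_mulmx detX detY mulr1 mulmx2E X01 Y01 mulr0 mul0r addr0 !eqxx.
Qed.

Lemma inB_inv X : inB X -> inB (invmx X).
Proof.
move=> BX; have [X00_unit X_unit] := (inB_unit00 BX, inB_unitmx BX).
case/andP: (BX) => /eqP X01 /eqP detX.
rewrite /inB det_inv detX invr1 eqxx andbT.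
have := congr1 (fun M => M i0 i1) (mulmxV X_unit).
rewrite mulmx2E X01 mul0r addr0 mxE /= => /eqP.
by rewrite (mulrI_eq0 _ (mulrI X00_unit)).
Qed.

Lemma inB_cancel D M : inB D -> inB (D *m M) -> inB M.
Proof.
by move=> BD BDM; rewrite -(mulKmx (inB_unitmx BD) M) inB_mul ?inB_inv.
Qed.

Lemma inB_cancelr D M : inB D -> inB (M *m D) -> inB M.
Proof.
by move=> BD BMD; rewrite -(mulmxK (inB_unitmx BD) M) inB_mul ?inB_inv.
Qed.

(** * Vertices and adjacency *)

Lemma inf_row0 : inf_row A 0 i0 = 1. Proof. by rewrite mxE. Qed.
Lemma inf_row1 : inf_row A 0 i1 = 0. Proof. by rewrite mxE. Qed.

Lemma row2P x y : x 0 i0 = y 0 i0 -> x 0 i1 = y 0 i1 -> x = y.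
Proof. by move=> eq0 eq1; apply/rowP => j; case: (ord2P j) => ->. Qed.

Lemma rows_equiv_refl x : rows_equiv x x.
Proof. by exists 1; rewrite ?unitr1 ?scale1r. Qed.

Lemma rows_equiv_sym x y : rows_equiv x y -> rows_equiv y x.
Proof. by case=> l l_unit ->; exists l^-1; rewrite ?unitrV // scalerA mulVr ?scale1r. Qed.

Lemma rows_equiv_trans x y z : rows_equiv x y -> rows_equiv y z -> rows_equiv x z.
Proof.
by case=> l l_unit -> [l' l'_unit ->]; exists (l' * l); rewrite ?unitrM ?l_unit ?l'_unit // scalerA.
Qed.

Lemma rows_equiv_scale l x : l \is a GRing.unit -> rows_equiv x (l *: x).
Proof. by exists l. Qed.

Lemma rows_equiv_mulmx x y M : rows_equiv x y -> rows_equiv (x *m M) (y *m M).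
Proof. by case=> l l_unit ->; exists l; rewrite // scalemxAl. Qed.

Lemma det_rows2 x y : \det (rows2 x y) = x 0 i0 * y 0 i1 - x 0 i1 * y 0 i0.
Proof. by rewrite det_mx2 !mxE. Qed.

Lemma rows2_mulmx x y M : rows2 (x *m M) (y *m M) = rows2 x y *m M.
Proof.
apply/matrixP => i j; rewrite !mxE.
by case: (ord2P i) => -> /=; apply: eq_bigr => k _; rewrite mxE.
Qed.

Lemma adjacentC x y : adjacent x y = adjacent y x.
Proof.
rewrite /adjacent !det_rows2 -[_ - _ in RHS]opprB unitrN.
by rewrite [x 0 i0 * _]mulrC [x 0 i1 * _]mulrC.
Qed.

Lemma adjacent_scalel l x y : l \is a GRing.unit -> adjacent (l *: x) y = adjacent x y.
Proof.
move=> l_unit; rewrite /adjacent !det_rows2 !mxE -!mulrA -mulrBr unitrM.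
by rewrite l_unit.
Qed.

Lemma adjacent_equivl x x' y : rows_equiv x x' -> adjacent x' y = adjacent x y.
Proof. by case=> l l_unit ->; rewrite adjacent_scalel. Qed.

Lemma adjacent_equivr x y y' : rows_equiv y y' -> adjacent x y' = adjacent x y.
Proof. by move=> eqy; rewrite adjacentC (adjacent_equivl _ eqy) adjacentC. Qed.

Lemma adjacent_mulmx x y M : M \in unitmx -> adjacent (x *m M) (y *m M) = adjacent x y.
Proof.
by rewrite unitmxE /adjacent rows2_mulmx det_mulmx unitrM => ->; rewrite andbT.
Qed.

Lemma adjacent_inf y : adjacent (inf_row A) y = (y 0 i1 \is a GRing.unit).
Proof. by rewrite /adjacent det_rows2 inf_row0 inf_row1 mul1r mul0r subr0. Qed.

Lemma unimodular_equiv x y : rows_equiv x y -> unimodular x -> unimodular y.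
Proof.
case=> l l_unit -> [s [t xst]]; exists (s / l), (t / l); rewrite !mxE.
transitivity ((l / l) * (x 0 i0 * s + x 0 i1 * t)); first ring.
by rewrite divrr // xst mulr1.
Qed.

Definition inf_act M : 'rV[A]_2 := act (inf_row A) M.

Lemma inf_actE M j : inf_act M 0 j = M i0 j.
Proof. by rewrite mulmx2E inf_row0 inf_row1 mul1r mul0r addr0. Qed.

Lemma inf_act1 : inf_act 1%:M = inf_row A.
Proof. exact: mulmx1. Qed.

Lemma inf_act_mulmxK N M : M \in unitmx -> inf_act (N *m M) *m invmx M = inf_act N.
Proof. by move=> M_unit; rewrite /inf_act /act mulmxA mulmxK. Qed.

Lemma inf_act_mulmxV M : M \in unitmx -> inf_act M *m invmx M = inf_row A.
Proof. by move=> M_unit; rewrite /inf_act /act mulmxK. Qed.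

Lemma unimodular_inf_act M : M \in unitmx -> unimodular (inf_act M).
Proof.
move=> M_unit; exists (invmx M i0 i0), (invmx M i1 i0).
by rewrite !inf_actE -mulmx2E mulmxV // mxE.
Qed.

Lemma inf_act_mulB D M : inB D -> inf_act (D *m M) = D i0 i0 *: inf_act M.
Proof.
rewrite inBE => /andP[/eqP D01 _].
by apply: row2P; rewrite [RHS]mxE !inf_actE mulmx2E D01 mul0r addr0.
Qed.

Definition Bequiv M N := exists2 D, inB D & N = D *m M.

Lemma Bequiv_inf_act M N : Bequiv M N -> rows_equiv (inf_act M) (inf_act N).
Proof. by case=> D BD ->; rewrite inf_act_mulB //; exact/rows_equiv_scale/inB_unit00. Qed.

Lemma inf_act_inB X : inB X -> rows_equiv (inf_act X) (inf_row A).
Proof.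
by move=> BX; rewrite -inf_act1; apply/rows_equiv_sym/Bequiv_inf_act; exists X; rewrite ?mulmx1.
Qed.

Lemma inf_act_equiv_inf M : rows_equiv (inf_act M) (inf_row A) -> M i0 i1 = 0.
Proof.
case=> l l_unit /rowP /(_ i1); rewrite inf_row1 mxE inf_actE => /esym/eqP.
by rewrite (mulrI_eq0 _ (mulrI l_unit)) => /eqP.
Qed.

Lemma adjacent_inf_act M x : M \in unitmx ->
  adjacent (inf_act M) (x *m M) = (x 0 i1 \is a GRing.unit).
Proof. by move=> M_unit; rewrite adjacent_mulmx // adjacent_inf. Qed.

Lemma adjacent_inf_act_mul M N : M \in unitmx ->
  adjacent (inf_act M) (inf_act (N *m M)) = (N i0 i1 \is a GRing.unit).
Proof. by move=> M_unit; rewrite /inf_act /act mulmxA adjacent_inf_act // inf_actE. Qed.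

(** * Paths of elementary steps *)

Definition Estep M a := Emx a *m M.

Lemma Estep_unitmx M a : M \in unitmx -> Estep M a \in unitmx.
Proof. by rewrite unitmx_mul Emx_unitmx. Qed.

Lemma foldl_Estep_unitmx M s : M \in unitmx -> foldl Estep M s \in unitmx.
Proof. by elim: s M => //= a s IH M M_unit; apply/IH/Estep_unitmx. Qed.

Lemma foldl_Estep_mulmx M N s : foldl Estep (M *m N) s = foldl Estep M s *m N.
Proof. by elim: s M => //= a s IH M; rewrite -IH /Estep mulmxA. Qed.

Lemma foldl_EstepE X s : foldl Estep X s = Eprod s *m X.
Proof. by rewrite -{1}(mul1mx X) foldl_Estep_mulmx. Qed.

Lemma EprodE s : Eprod s = foldl Estep 1%:M s.
Proof. by []. Qed.

Lemma Eprod_cat s t : Eprod (s ++ t) = foldl Estep (Eprod s) t.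
Proof. exact: foldl_cat. Qed.

Lemma last_scanl_Estep M s : last M (scanl Estep M s) = foldl Estep M s.
Proof. by elim: s M => //= a s IH M; rewrite IH. Qed.

Lemma sym_loopE X s : sym_loop (X, s) = inf_act X :: map inf_act (scanl Estep X s).
Proof. by []. Qed.

Lemma adjacent_Estep M a : M \in unitmx -> adjacent (inf_act M) (inf_act (Estep M a)).
Proof. by move=> M_unit; rewrite adjacent_inf_act_mul // EmxE mx2E unitr1. Qed.

Lemma path_scanl_Estep M s : M \in unitmx ->
  path (@adjacent A) (inf_act M) (map inf_act (scanl Estep M s)).
Proof.
elim: s M => //= a s IH M M_unit.
by rewrite adjacent_Estep // IH // Estep_unitmx.
Qed.

Lemma unimodular_scanl_Estep M s : M \in unitmx ->
  {in map inf_act (scanl Estep M s), forall x, unimodular x}.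
Proof.
elim: s M => //= a s IH M M_unit x; rewrite inE => /predU1P[-> | x_in].
  exact/unimodular_inf_act/Estep_unitmx.
exact: IH (Estep_unitmx _ M_unit) _ x_in.
Qed.

Lemma inB_mx2_neg a : inB (mx2 (-1) 0 a (-1)).
Proof. by rewrite inB_mx2 mulrNN mulr1. Qed.

Lemma inB_mx2_unit u : u \is a GRing.unit -> inB (mx2 u 0 (-1) u^-1).
Proof. by move=> u_unit; rewrite inB_mx2 divrr. Qed.

Lemma Emx2_01 a b : (Emx b *m Emx a) i0 i1 = b.
Proof. by rewrite !EmxE mulmx2 mx2E mulr1 mulr0 addr0. Qed.

Lemma adjacent_Estep2 M a b : M \in unitmx ->
  adjacent (inf_act M) (inf_act (Estep (Estep M a) b)) = (b \is a GRing.unit).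
Proof. by move=> M_unit; rewrite /Estep mulmxA adjacent_inf_act_mul // Emx2_01. Qed.

Lemma Estep_zero N a : Estep (Estep N a) 0 = mx2 (-1) 0 (- a) (-1) *m N.
Proof. by rewrite /Estep mulmxA !EmxE mulmx2; congr (mx2 _ _ _ _ *m _); ring. Qed.

Lemma Estep_zero_mid N a b :
  Estep (Estep (Estep N a) 0) b = mx2 (-1) 0 0 (-1) *m Estep N (a + b).
Proof. by rewrite Estep_zero /Estep !mulmxA !EmxE !mulmx2; congr (mx2 _ _ _ _ *m _); ring. Qed.

Lemma Estep_unit N a u : u \is a GRing.unit ->
  Estep (Estep N a) u = mx2 u 0 (-1) u^-1 *m Estep N (a - u^-1).
Proof.
move=> u_unit; rewrite /Estep !mulmxA !EmxE !mulmx2; congr (mx2 _ _ _ _ *m _); try ring.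
by rewrite mulrBr divrr // mul0r addr0 mulrN1.
Qed.

Lemma backtrack_frame M a : M = mx2 (-1) 0 a (-1) *m Estep (Estep M a) 0.
Proof.
rewrite Estep_zero mulmxA mulmx2 -{1}[M]mul1mx mx2_1.
by congr (mx2 _ _ _ _ *m _); ring.
Qed.

Lemma triangle_frame M a u : u \is a GRing.unit ->
  Estep M (a - u^-1) = mx2 u^-1 0 1 u *m Estep (Estep M a) u.
Proof.
move=> u_unit; rewrite Estep_unit // mulmxA mulmx2 mulVr ?divrr //.
by rewrite -[LHS]mul1mx mx2_1; congr (mx2 _ _ _ _ *m _); ring.
Qed.

(* The formula for [b'_1] in relation (1) comes from this identity. *)
Lemma Emx_mulB b Z : inB Z ->
  Emx b *m Z = mx2 (Z i1 i1) 0 0 (Z i0 i0) *m Emx (Z i0 i0 ^+ 2 * b + Z i1 i0 * Z i0 i0).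
Proof.
rewrite inBE => /andP[/eqP Z01 /eqP Z00Z11].
rewrite [Z in LHS]mx2_eta Z01 !EmxE !mulmx2; congr mx2; try ring.
transitivity (Z i0 i0 * Z i1 i1 * (Z i0 i0 * b + Z i1 i0)); last ring.
by rewrite Z00Z11; ring.
Qed.

Lemma alt_inv e u s : alt e u^-1 s = alt (~~ e) u s.
Proof.
elim: s e => //= b s IH e; rewrite IH negbK.
by case: e; rewrite /= exprVn ?invrK.
Qed.

Lemma alt_sqr1 e u s : u ^+ 2 = 1 -> alt e u s = s.
Proof. by move=> u2; elim: s e => //= b s IH e; rewrite IH; case: e; rewrite u2 ?invr1 mul1r. Qed.

Lemma altK e u s : u \is a GRing.unit -> alt e u (alt (~~ e) u s) = s.
Proof.
move=> u_unit; elim: s e => //= b s IH e; rewrite IH mulrA.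
by case: e; rewrite /= ?divrr ?mulVr ?unitrX // mul1r.
Qed.

Lemma bprime_diag u t : bprime (mx2 u^-1 0 0 u) t = alt false u t.
Proof.
case: t => //= b t; rewrite !mx2E mul0r addr0 alt_inv exprVn.
by rewrite [alt _ _ _]/=.
Qed.

Lemma bprime_neg1 t : bprime (mx2 (-1) 0 0 (-1)) t = t.
Proof.
case: t => //= b t; rewrite !mx2E alt_sqr1 ?sqrrN ?expr1n //.
by rewrite mul1r mul0r addr0.
Qed.

Lemma Bequiv_Estep_bprime Z T t : inB Z ->
  Forall2 Bequiv (scanl Estep T (bprime Z t)) (scanl Estep (Z *m T) t).
Proof.
elim: t Z T => [|b t IH] Z T BZ; first by constructor.
have BZ' : inB (mx2 (Z i1 i1) 0 0 (Z i0 i0)).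
  by move: BZ; rewrite inB_mx2 inBE mulrC => /andP[].
have step : Estep (Z *m T) b = mx2 (Z i1 i1) 0 0 (Z i0 i0) *m
                                Estep T (Z i0 i0 ^+ 2 * b + Z i1 i0 * Z i0 i0).
  by rewrite /Estep mulmxA Emx_mulB // -mulmxA.
set Z' := mx2 _ _ _ _ in BZ' step.
rewrite /= step; constructor; first by exists Z'.
have := IH Z' (Estep T _) BZ'.
by rewrite /Z' -(inB_inv00 BZ) bprime_diag.
Qed.

Lemma foldl_Estep_bprime Z T t : inB Z ->
  Bequiv (foldl Estep T (bprime Z t)) (foldl Estep (Z *m T) t).
Proof.
move=> BZ; rewrite -!last_scanl_Estep.
by apply: Forall2_last (Bequiv_Estep_bprime T t BZ); exists Z.
Qed.

Local Notation seq_equiv := (Forall2 (@rows_equiv A)).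

Lemma seq_equiv_refl xs : seq_equiv xs xs.
Proof. exact/Forall2_refl/rows_equiv_refl. Qed.

Lemma seq_equiv_sym xs ys : seq_equiv xs ys -> seq_equiv ys xs.
Proof. exact/Forall2_sym/rows_equiv_sym. Qed.

Lemma seq_equiv_trans xs ys zs : seq_equiv xs ys -> seq_equiv ys zs -> seq_equiv xs zs.
Proof. exact/Forall2_trans/rows_equiv_trans. Qed.

Lemma seq_equiv_mem xs ys y : seq_equiv xs ys -> y \in ys -> exists2 x, x \in xs & rows_equiv x y.
Proof.
elim=> // x y' xs' ys' xy' _ IH; rewrite inE => /predU1P[-> | /IH[x' x'_in x'y]].
  by exists x; rewrite ?mem_head.
by exists x'; rewrite // inE x'_in orbT.
Qed.

Lemma scanl_Estep_bprime Z T t : inB Z ->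
  seq_equiv (map inf_act (scanl Estep T (bprime Z t))) (map inf_act (scanl Estep (Z *m T) t)).
Proof. by move=> BZ; apply/(Forall2_map Bequiv_inf_act)/Bequiv_Estep_bprime. Qed.

(** * Coefficients of a path and normal symbols *)

(* The [a] with [x ~ oo . E(a)] when [x] is adjacent to [oo]; [0] is a junk
   value for the other rows. *)
Definition Ecoef x : A := if x 0 i1 \is a GRing.unit then x 0 i0 / x 0 i1 else 0.

Fixpoint path_coefs M (xs : seq 'rV[A]_2) : seq A :=
  if xs is x :: xs' then
    let a := Ecoef (x *m invmx M) in a :: path_coefs (Estep M a) xs'
  else [::].

Definition loop_coefs (s : seq 'rV[A]_2) : seq A := path_coefs 1%:M (behead s).

Definition normal_symbol (s : seq 'rV[A]_2) : symbol A := (1%:M, loop_coefs s).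

Lemma Ecoef_scale l x : l \is a GRing.unit -> Ecoef (l *: x) = Ecoef x.
Proof.
move=> l_unit; rewrite /Ecoef !mxE unitrM l_unit /=; case: ifP => // x1_unit.
by rewrite invrM // [_^-1 * _]mulrC mulrACA divrr // mul1r.
Qed.

Lemma Ecoef_Emx a : Ecoef (inf_act (Emx a)) = a.
Proof. by rewrite /Ecoef !inf_actE !EmxE !mx2E unitr1 divr1. Qed.

Lemma path_coefs_equiv M xs ys : seq_equiv xs ys -> path_coefs M xs = path_coefs M ys.
Proof.
move=> xy; elim: xy M => //= x y xs' ys' [l l_unit ->] _ IH M.
by rewrite -scalemxAl Ecoef_scale // IH.
Qed.

Lemma path_coefs_cat M xs ys :
  path_coefs M (xs ++ ys) = path_coefs M xs ++ path_coefs (foldl Estep M (path_coefs M xs)) ys.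
Proof. by elim: xs M => //= x xs IH M; rewrite IH. Qed.

Lemma path_coefs_scanl M s : M \in unitmx ->
  path_coefs M (map inf_act (scanl Estep M s)) = s.
Proof.
elim: s M => //= a s IH M M_unit.
by rewrite /Estep inf_act_mulmxK // Ecoef_Emx IH // Estep_unitmx.
Qed.

Lemma scanl_path_coefs x0 M xs : path (@adjacent A) x0 xs ->
  rows_equiv (inf_act M) x0 -> M \in unitmx ->
  seq_equiv (map inf_act (scanl Estep M (path_coefs M xs))) xs.
Proof.
elim: xs x0 M => [|x1 xs IH] x0 M /=; first by constructor.
move=> /andP[x0x1 x1xs] Mx0 M_unit.
set w := x1 *m invmx M; have x1E : x1 = w *m M by rewrite /w mulmxKV.
have w1_unit : w 0 i1 \is a GRing.unit.
  by rewrite -(adjacent_inf_act _ M_unit) -x1E -(adjacent_equivl _ Mx0).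
(* [w = w_1 (a, 1)], and [(a, 1)] is the first row of [E(a)] *)
have x1E' : rows_equiv (inf_act (Estep M (Ecoef w))) x1.
  rewrite /inf_act /act /Estep mulmxA x1E; apply: rows_equiv_mulmx.
  exists (w 0 i1) => //; apply: row2P; rewrite [RHS]mxE inf_actE EmxE ?mx2E.
    by rewrite /Ecoef w1_unit mulrC divrK.
  by rewrite mulr1.
by constructor; last exact: IH x1xs x1E' (Estep_unitmx _ M_unit).
Qed.

Lemma path_coefs_bprime Z M s : inB Z -> M \in unitmx ->
  path_coefs M (map inf_act (scanl Estep (Z *m M) s)) = bprime Z s.
Proof.
move=> BZ M_unit; rewrite -(path_coefs_scanl (bprime Z s) M_unit).
exact/esym/path_coefs_equiv/scanl_Estep_bprime.
Qed.

(** * Edge loops *)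

Lemma is_loopP x0 xs : is_loop (x0 :: xs) <->
  [/\ rows_equiv x0 (inf_row A), rows_equiv (last x0 xs) (inf_row A),
      {in x0 :: xs, forall x, unimodular x} & path (@adjacent A) x0 xs].
Proof.
split; first by case=> y [ys [[<- <-] [inf_x0 [inf_last [unimod adj]]]]].
by case=> inf_x0 inf_last unimod adj; exists x0, xs.
Qed.

Lemma is_loop_nil : ~ is_loop ([::] : seq 'rV[A]_2).
Proof. by case=> x [xs [nil_eq _]]. Qed.

Lemma path_equiv x0 y0 xs ys : rows_equiv x0 y0 -> seq_equiv xs ys ->
  path (@adjacent A) x0 xs -> path (@adjacent A) y0 ys.
Proof.
move=> x0y0 xys; elim: xys x0 y0 x0y0 => //= x y xs' ys' xy _ IH x0 y0 x0y0.
by case/andP=> x0x adj; rewrite (adjacent_equivl _ x0y0) (adjacent_equivr _ xy) x0x (IH x).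
Qed.

Lemma is_loop_equiv xs ys : is_loop xs -> seq_equiv xs ys -> is_loop ys.
Proof.
case: xs => [/is_loop_nil //|x0 xs] /is_loopP[inf_x0 inf_last unimod adj] xys.
inversion xys as [|? y0 ? ys0 x0y0 xsys]; subst.
apply/is_loopP; split.
- exact: rows_equiv_trans (rows_equiv_sym x0y0) inf_x0.
- exact: rows_equiv_trans (rows_equiv_sym (Forall2_last x0y0 xsys)) inf_last.
- move=> y /(seq_equiv_mem xys)[x x_in xy]; exact: unimodular_equiv xy (unimod x x_in).
- exact: path_equiv x0y0 xsys adj.
Qed.

Lemma is_loop_cat xs ys : is_loop xs -> is_loop ys -> is_loop (cat_loop xs ys).
Proof.
case: xs => [/is_loop_nil //|x0 xs]; case: ys => [_ /is_loop_nil //|y0 ys].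
move=> /is_loopP[inf_x0 inf_last unimod adj] /is_loopP[inf_y0 inf_ylast unimod' adj'].
rewrite /cat_loop /= -cat_cons; apply/is_loopP; split => //.
- by rewrite last_cat; case: ys inf_ylast {adj' unimod'}.
- move=> x; rewrite -cat_cons mem_cat => /orP[/unimod // | x_in].
  by apply: unimod'; rewrite inE x_in orbT.
- rewrite cat_path adj /=; case: ys adj' {inf_ylast unimod'} => //= y1 ys /andP[y0y1 ->].
  by rewrite andbT (adjacent_equivl _ (rows_equiv_trans inf_y0 (rows_equiv_sym inf_last))).
Qed.

Lemma is_loop_rev xs : is_loop xs -> is_loop (rev xs).
Proof.
case: xs => [/is_loop_nil //|x0 xs] /is_loopP[inf_x0 inf_last unimod adj].
rewrite rev_lastI; apply/is_loopP; split => //.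
- by rewrite -(last_cons x0) -rev_lastI rev_cons last_rcons.
- by move=> x; rewrite -rev_lastI mem_rev; apply: unimod.
- by rewrite rev_path; apply: sub_path adj => x y; rewrite adjacentC.
Qed.

Lemma det_foldl_Estep M s : \det (foldl Estep M s) = \det M.
Proof. by elim: s M => //= a s IH M; rewrite IH det_mulmx det_Emx mul1r. Qed.

Lemma is_loop_sym_loop p : valid_sym p -> is_loop (sym_loop p).
Proof.
case: p => X s /andP[/= BX Bs]; have X_unit := inB_unitmx BX.
rewrite sym_loopE; apply/is_loopP; split.
- exact: inf_act_inB.
- by rewrite last_map last_scanl_Estep foldl_EstepE; apply/inf_act_inB/inB_mul.
- move=> x; rewrite inE => /predU1P[-> | ]; first exact: unimodular_inf_act.
  exact: unimodular_scanl_Estep.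
- exact: path_scanl_Estep.
Qed.

Lemma is_loop_letter (l : bool * symbol A) : valid_sym l.2 -> is_loop (letter_loop l).
Proof. by case: l => [[] p] /is_loop_sym_loop //= /is_loop_rev. Qed.

Lemma is_loop_inf : is_loop [:: inf_row A].
Proof.
apply/is_loopP; split => //; try exact: rows_equiv_refl.
by move=> x; rewrite inE => /eqP ->; exists 1, 0; rewrite inf_row0 inf_row1 mulr1 mulr0 addr0.
Qed.

Lemma is_loop_eval w : valid_word w -> is_loop (eval_word w).
Proof.
elim: w => [_|l w IH /andP[l_valid w_valid]]; first exact: is_loop_inf.
exact: is_loop_cat (is_loop_letter l_valid) (IH w_valid).
Qed.

Lemma normal_symbol_equiv x0 xs : is_loop (x0 :: xs) ->
  seq_equiv (sym_loop (normal_symbol (x0 :: xs))) (x0 :: xs).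
Proof.
case/is_loopP => inf_x0 _ _ adj.
have inf_x0' : rows_equiv (inf_act 1%:M) x0 by rewrite inf_act1; apply: rows_equiv_sym.
rewrite sym_loopE; constructor; first exact: inf_x0'.
exact: scanl_path_coefs adj inf_x0' (unitmx1 _ _).
Qed.

Lemma valid_normal_symbol xs : is_loop xs -> valid_sym (normal_symbol xs).
Proof.
case: xs => [/is_loop_nil //|x0 xs] loop_xs.
have last_equiv := Forall2_last (rows_equiv_refl x0) (normal_symbol_equiv loop_xs).
case/is_loopP: loop_xs => _ inf_last _ _.
rewrite /valid_sym /= inB1 /inB EprodE det_foldl_Estep det1 eqxx andbT.
move: (rows_equiv_trans last_equiv inf_last).
by rewrite /= last_map last_scanl_Estep => /inf_act_equiv_inf ->.
Qed.

Lemma loop_equiv_move xs ys :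
  is_loop xs -> is_loop ys -> loop_move xs ys -> loop_equiv xs ys.
Proof. by move=> loop_xs loop_ys xys; apply: rst_step. Qed.

Lemma loop_equiv_seq_equiv xs ys : is_loop xs -> seq_equiv xs ys -> loop_equiv xs ys.
Proof.
move=> loop_xs xys.
suff equiv_l : forall l, is_loop (l ++ xs) -> loop_equiv (l ++ xs) (l ++ ys).
  exact: equiv_l [::] loop_xs.
elim: xys => [|x y xs' ys' xy _ IH] l loop_l; first exact: rst_refl.
have loop_l' : is_loop (l ++ y :: xs').
  apply: is_loop_equiv loop_l _; apply: Forall2_cat; first exact: seq_equiv_refl.
  by constructor; last exact: seq_equiv_refl.
apply: rst_trans (loop_equiv_move loop_l loop_l' (lm_rep l xs' xy)) _.
by have := IH (rcons l y); rewrite -!cats1 -!catA; apply.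
Qed.

Lemma eval_pos1 p : eval_word [:: pos p] = sym_loop p.
Proof. exact: cats0. Qed.

Lemma loop_equiv_normal xs : is_loop xs -> loop_equiv xs (eval_word [:: pos (normal_symbol xs)]).
Proof.
case: xs => [/is_loop_nil //|x0 xs] loop_xs; rewrite eval_pos1.
exact/(loop_equiv_seq_equiv loop_xs)/seq_equiv_sym/normal_symbol_equiv.
Qed.

Lemma path_coefs_frame Z M x0 xs : inB Z -> M \in unitmx ->
  path (@adjacent A) x0 xs -> rows_equiv (inf_act (Z *m M)) x0 ->
  path_coefs M xs = bprime Z (path_coefs (Z *m M) xs).
Proof.
move=> BZ M_unit adj ZMx0; have ZM_unit : Z *m M \in unitmx.
  by rewrite unitmx_mul inB_unitmx.
rewrite -(path_coefs_bprime _ BZ M_unit); apply: path_coefs_equiv.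
exact/seq_equiv_sym/(scanl_path_coefs adj ZMx0).
Qed.

Lemma loop_coefs_equiv xs ys : seq_equiv xs ys -> loop_coefs xs = loop_coefs ys.
Proof. by case=> // x y xs' ys' _ xys; apply: path_coefs_equiv. Qed.

Lemma loop_coefs_split l x xs : is_loop (l ++ x :: xs) ->
  exists P M, [/\ M \in unitmx, rows_equiv (inf_act M) x &
    forall ys, loop_coefs (l ++ x :: ys) = P ++ path_coefs M ys].
Proof.
case: l => [|x0 l] /= /is_loopP[inf_x0 _ _].
  move=> _; exists [::], 1%:M; split; rewrite ?unitmx1 ?inf_act1 //.
  exact: rows_equiv_sym.
rewrite -cat_rcons cat_path => /andP[adj _].
have inf_x0' : rows_equiv (inf_act 1%:M) x0 by rewrite inf_act1; apply: rows_equiv_sym.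
set P := path_coefs 1%:M (rcons l x).
exists P, (foldl Estep 1%:M P); split.
- exact/foldl_Estep_unitmx/unitmx1.
- have := Forall2_last inf_x0' (scanl_path_coefs adj inf_x0' (unitmx1 _ _)).
  by rewrite last_map last_scanl_Estep last_rcons.
- by move=> ys; rewrite /loop_coefs /= -cat_rcons path_coefs_cat.
Qed.

Lemma is_loop_path_from l x xs : is_loop (l ++ x :: xs) -> path (@adjacent A) x xs.
Proof.
case: l => [|x0 l] /= /is_loopP[_ _ _] //.
by rewrite cat_path => /andP[_] /= /andP[].
Qed.

Lemma Ecoef_equiv x y N : rows_equiv x y -> Ecoef (y *m N) = Ecoef (x *m N).
Proof. by case=> l l_unit ->; rewrite -scalemxAl Ecoef_scale. Qed.

Lemma Estep2_equiv_inf M a b : M \in unitmx ->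
  rows_equiv (inf_act (Estep (Estep M a) b)) (inf_act M) -> b = 0.
Proof.
move=> M_unit /(rows_equiv_mulmx (invmx M)).
rewrite /Estep mulmxA inf_act_mulmxK // inf_act_mulmxV //.
by move/inf_act_equiv_inf; rewrite Emx2_01.
Qed.

Lemma Ecoef_Estep2 M a u : M \in unitmx -> u \is a GRing.unit ->
  Ecoef (inf_act (Estep (Estep M a) u) *m invmx M) = a - u^-1.
Proof.
move=> M_unit u_unit; rewrite Estep_unit // /Estep mulmxA inf_act_mulmxK //.
by rewrite inf_act_mulB ?inB_mx2_unit // Ecoef_scale ?Ecoef_Emx ?mx2E.
Qed.

(** * Moves of loops and relations between normal symbols *)

Lemma word_equiv_rel w1 w2 : rel_pair w1 w2 -> word_equiv w1 w2.
Proof. by move=> w12; apply: rst_step; exists [::], [::], w1, w2; rewrite /= !cats0. Qed.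

Lemma word_equiv_sym w1 w2 : word_equiv w1 w2 -> word_equiv w2 w1.
Proof. exact: rst_sym. Qed.

Lemma word_equiv_ctx l r w1 w2 : word_equiv w1 w2 -> word_equiv (l ++ w1 ++ r) (l ++ w2 ++ r).
Proof.
elim=> [x y [l' [r' [u [v [uv [-> ->]]]]]] | x | x y _ IH | x y z _ IH1 _ IH2].
- by apply: rst_step; exists (l ++ l'), (r' ++ r), u, v; rewrite -!catA.
- exact: rst_refl.
- exact: rst_sym.
- exact: rst_trans IH1 IH2.
Qed.

Lemma word_equiv_cons l w1 w2 : word_equiv w1 w2 -> word_equiv (l :: w1) (l :: w2).
Proof. by move/(word_equiv_ctx [:: l] [::]); rewrite !cats0. Qed.

Lemma normal_symbol_backtrack l r x y z :
  is_loop (l ++ [:: x; y; z] ++ r) -> rows_equiv x z ->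
  word_equiv [:: pos (normal_symbol (l ++ [:: x; y; z] ++ r))]
             [:: pos (normal_symbol (l ++ x :: r))].
Proof.
move=> loop_xs xz; have valid := valid_normal_symbol loop_xs.
have [P [M [M_unit Mx coefsE]]] := loop_coefs_split loop_xs.
have adj := is_loop_path_from loop_xs.
move: (scanl_path_coefs adj Mx M_unit) => /= /Forall2_consE[_ /Forall2_consE[zE _]].
rewrite /normal_symbol !coefsE /= in valid zE *.
set a := Ecoef _ in valid zE *; set b := Ecoef _ in valid zE *.
have Mz := rows_equiv_trans Mx xz.
have b0 : b = 0 by apply: Estep2_equiv_inf M_unit (rows_equiv_trans zE (rows_equiv_sym Mz)).
rewrite b0 in valid *.
case: r adj valid {loop_xs coefsE zE} => [|v r] adj valid.
  by rewrite /= ?cats0 in valid *; apply/word_equiv_rel/rp_zero_end.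
have adj_z : path (@adjacent A) z (v :: r) by case/and3P: adj.
have := path_coefs_frame (inB_mx2_neg a) (Estep_unitmx 0 (Estep_unitmx a M_unit)) adj_z.
rewrite -backtrack_frame => /(_ Mz) frame.
have [g [rest grest]] : exists g rest, path_coefs M (v :: r) = g :: rest by do 2 eexists.
rewrite frame grest /= !mx2E alt_sqr1 ?sqrrN ?expr1n // in valid *.
apply: rst_trans (word_equiv_rel (rp_zero_mid valid)) _.
by rewrite /= mul1r mulrN1 addrC subrK; apply: rst_refl.
Qed.

Lemma normal_symbol_triangle l r x y z :
  is_loop (l ++ [:: x; y; z] ++ r) -> adjacent x z ->
  word_equiv [:: pos (normal_symbol (l ++ [:: x; y; z] ++ r))]
             [:: pos (normal_symbol (l ++ x :: z :: r))].
Proof.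
move=> loop_xs xz; have valid := valid_normal_symbol loop_xs.
have [P [M [M_unit Mx coefsE]]] := loop_coefs_split loop_xs.
have adj := is_loop_path_from loop_xs.
move: (scanl_path_coefs adj Mx M_unit) => /= /Forall2_consE[_ /Forall2_consE[zE _]].
rewrite /normal_symbol !coefsE /= in valid zE *.
set a := Ecoef _ in valid zE *; set b := Ecoef _ in valid zE *.
have b_unit : b \is a GRing.unit.
  rewrite -(adjacent_Estep2 a b M_unit) -(adjacent_equivl _ Mx).
  by rewrite -(adjacent_equivr _ zE).
rewrite (Ecoef_equiv _ zE) Ecoef_Estep2 //.
case: r adj valid zE {loop_xs coefsE} => [|v r] adj valid zE.
  by rewrite /= ?cats0 in valid *; apply/word_equiv_rel/rp_unit_end.
have adj_z : path (@adjacent A) z (v :: r) by case/and3P: adj.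
have BZ : inB (mx2 b^-1 0 1 b) by rewrite inB_mx2 mulVr.
have ZM2z : rows_equiv (inf_act (mx2 b^-1 0 1 b *m Estep (Estep M a) b)) z.
  by apply: rows_equiv_trans zE; apply/rows_equiv_sym/Bequiv_inf_act; exists (mx2 b^-1 0 1 b).
have := path_coefs_frame BZ (Estep_unitmx b (Estep_unitmx a M_unit)) adj_z ZM2z.
rewrite -triangle_frame // => frame.
have [g [rest grest]] :
  exists g rest, path_coefs (Estep M (a - b^-1)) (v :: r) = g :: rest by do 2 eexists.
rewrite frame grest /= !mx2E in valid *.
apply: rst_trans (word_equiv_rel (rp_unit_mid b_unit valid)) _.
have -> : b ^+ 2 * ((b^-1) ^+ 2 * g + 1 * b^-1) - b = g.
  by rewrite mulrDr mulrA -exprMn divrr // expr1n !mul1r expr2 -mulrA divrr // mulr1 addrK.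
by rewrite /= alt_inv altK //; apply: rst_refl.
Qed.

Lemma normal_symbol_step xs ys : loop_step xs ys ->
  word_equiv [:: pos (normal_symbol xs)] [:: pos (normal_symbol ys)].
Proof.
case=> loop_xs _ move; case: move loop_xs => [l r x y xy | l r x y z xz | l r x y z _ _ xz] loop_xs.
- rewrite /normal_symbol (@loop_coefs_equiv (l ++ x :: r) (l ++ y :: r)); first exact: rst_refl.
  apply: Forall2_cat; first exact: seq_equiv_refl.
  by constructor; last exact: seq_equiv_refl.
- exact: normal_symbol_backtrack.
- exact: normal_symbol_triangle.
Qed.

Lemma loop_equiv_normal_symbol xs ys : loop_equiv xs ys ->
  word_equiv [:: pos (normal_symbol xs)] [:: pos (normal_symbol ys)].
Proof.
elim=> [? ? /normal_symbol_step // | ? | ? ? _ | ? ? ? _ IH1 _ IH2].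
- exact: rst_refl.
- exact: rst_sym.
- exact: rst_trans IH1 IH2.
Qed.

(** * Products and inverses *)

Lemma Zmat_mul Y X s : X \in unitmx -> Zmat Y X s *m foldl Estep X s = Y.
Proof.
move=> X_unit; rewrite /Zmat -[RHS](mulmxKV X_unit Y); clear X_unit.
elim: s X (Y *m invmx X) => //= a s IH N M.
by rewrite IH /Estep mulmxA mulmxKV ?Emx_unitmx.
Qed.

Lemma inB_Zmat Y X s : inB X -> inB (Eprod s) -> inB Y -> inB (Zmat Y X s).
Proof.
move=> BX Bs BY; have BT : inB (foldl Estep X s) by rewrite foldl_EstepE inB_mul.
by apply: (inB_cancelr BT); rewrite Zmat_mul ?inB_unitmx.
Qed.

Lemma valid_sym_mul X s Y t : valid_sym (X, s) -> valid_sym (Y, t) ->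
  valid_sym (X, s ++ bprime (Zmat Y X s) t).
Proof.
move=> /andP[/= BX Bs] /andP[/= BY Bt]; rewrite /valid_sym /= BX /=.
have [D BD TE] := foldl_Estep_bprime (foldl Estep X s) t (inB_Zmat BX Bs BY).
rewrite Zmat_mul ?inB_unitmx // foldl_EstepE in TE.
have : inB (foldl Estep (foldl Estep X s) (bprime (Zmat Y X s) t)).
  by apply: (inB_cancel BD); rewrite -TE inB_mul.
by rewrite -foldl_cat foldl_EstepE; apply: inB_cancelr.
Qed.

Lemma loop_coefs_cat X s e : valid_sym (X, s) -> is_loop e ->
  loop_coefs (cat_loop (sym_loop (X, s)) e) =
  bprime X (s ++ bprime (Zmat 1%:M X s) (loop_coefs e)).
Proof.
case: e => [_ /is_loop_nil //|e0 e] /andP[/= BX Bs] loop_e.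
rewrite -(path_coefs_bprime _ BX (unitmx1 _ _)) mulmx1 scanl_cat map_cat.
apply: path_coefs_equiv; apply: Forall2_cat; first exact: seq_equiv_refl.
apply/seq_equiv_sym/(seq_equiv_trans (scanl_Estep_bprime _ _ (inB_Zmat BX Bs inB1))).
rewrite Zmat_mul ?inB_unitmx //.
by case/Forall2_consE: (normal_symbol_equiv loop_e).
Qed.

Lemma valid_sym1 : valid_sym (1%:M, [::] : seq A).
Proof. by rewrite /valid_sym /= inB1. Qed.

Lemma word_equiv_mul_normal p e : valid_sym p -> is_loop e ->
  word_equiv [:: pos p; pos (normal_symbol e)]
             [:: pos (normal_symbol (cat_loop (sym_loop p) e))].
Proof.
case: p => X s valid_p loop_e; have valid_e := valid_normal_symbol loop_e.
set t := bprime (Zmat 1%:M X s) (loop_coefs e).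
have valid_st : valid_sym (X, s ++ t) := valid_sym_mul valid_p valid_e.
(* [<X, s> <1, t> = <X, s ++ t'> = <1, []> <X, s ++ t'> = <1, b'(X) (s ++ t')>] *)
apply: rst_trans (word_equiv_rel (rp_mul valid_p valid_e)) _.
apply: rst_trans (word_equiv_sym (word_equiv_ctx [::] [:: pos (X, s ++ t)]
                                   (word_equiv_rel (rp_triv inB1)))) _.
apply: rst_trans (word_equiv_rel (rp_mul valid_sym1 valid_st)) _.
rewrite /normal_symbol loop_coefs_cat // /Zmat /= invmx1 mulmx1.
exact: rst_refl.
Qed.

Lemma is_loop_there_and_back x0 xs : rows_equiv x0 (inf_row A) ->
  path (@adjacent A) x0 xs -> {in x0 :: xs, forall x, unimodular x} ->
  is_loop ((x0 :: xs) ++ behead (rev (x0 :: xs))).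
Proof.
move=> inf_x0 adj unimod; rewrite rev_lastI /=; apply/is_loopP; split => //.
- by rewrite last_cat -(last_cons x0) -rev_lastI rev_cons last_rcons.
- move=> x; rewrite -cat_cons mem_cat => /orP[/unimod // | ].
  by rewrite mem_rev => /mem_belast; apply: unimod.
- rewrite cat_path adj /= rev_path; apply: sub_path adj => x y; by rewrite adjacentC.
Qed.

Lemma loop_equiv_there_and_back x0 xs e : rows_equiv x0 (inf_row A) ->
  path (@adjacent A) x0 xs -> {in x0 :: xs, forall x, unimodular x} -> is_loop e ->
  loop_equiv ((x0 :: xs) ++ behead (rev (x0 :: xs)) ++ behead e) e.
Proof.
move=> inf_x0; elim/last_ind: xs => [|xs y IH] adj unimod loop_e.
  case: e loop_e => [/is_loop_nil //|e0 e] loop_e /=.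
  apply/rst_sym/(loop_equiv_seq_equiv loop_e); constructor; last exact: seq_equiv_refl.
  by case/is_loopP: loop_e => inf_e0 _ _ _; apply: rows_equiv_trans inf_e0 (rows_equiv_sym _).
have adj' : path (@adjacent A) x0 xs by move: adj; rewrite rcons_path => /andP[].
have unimod' : {in x0 :: xs, forall x, unimodular x}.
  by move=> x x_in; apply: unimod; rewrite -rcons_cons mem_rcons inE x_in orbT.
apply: rst_trans (IH adj' unimod' loop_e).
rewrite !catA; apply: loop_equiv_move.
- exact: is_loop_cat (is_loop_there_and_back inf_x0 adj unimod) loop_e.
- exact: is_loop_cat (is_loop_there_and_back inf_x0 adj' unimod') loop_e.
have -> : behead (rev (x0 :: rcons xs y)) = last x0 xs :: behead (rev (x0 :: xs)).
  by rewrite -rcons_cons rev_rcons rev_lastI.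
rewrite -rcons_cons (lastI x0 xs) -!cats1 -!catA /=.
exact: lm_back (rows_equiv_refl _).
Qed.

Lemma word_equiv_triv : word_equiv [:: pos (1%:M, [::] : seq A)] [::].
Proof. exact/word_equiv_rel/rp_triv/inB1. Qed.

Lemma word_equiv_inv_normal p : valid_sym p ->
  word_equiv [:: (false, p)] [:: pos (normal_symbol (rev (sym_loop p)))].
Proof.
move=> valid_p; set q := normal_symbol _.
have loop_p := is_loop_sym_loop valid_p.
have pq1 : word_equiv [:: pos p; pos q] [::].
  apply: rst_trans (word_equiv_mul_normal valid_p (is_loop_rev loop_p)) _.
  apply: rst_trans word_equiv_triv.
  case: (sym_loop p) loop_p => [/is_loop_nil //|x0 xs] /is_loopP[inf_x0 _ unimod adj].
  have := loop_equiv_there_and_back inf_x0 adj unimod is_loop_inf.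
  by rewrite /= cats0 => /loop_equiv_normal_symbol.
apply: rst_trans (word_equiv_sym (word_equiv_ctx [:: (false, p)] [::] pq1)) _.
rewrite cats0.
by apply: (word_equiv_ctx [::] [:: pos q] (word_equiv_rel (rp_cancel false valid_p))).
Qed.

Lemma word_equiv_normal w : valid_word w -> word_equiv w [:: pos (normal_symbol (eval_word w))].
Proof.
elim: w => [_|l w IH /andP[valid_l valid_w]]; first exact/word_equiv_sym/word_equiv_triv.
apply: rst_trans (word_equiv_cons l (IH valid_w)) _.
have loop_w := is_loop_eval valid_w.
case: l valid_l => [[] p] valid_p; first exact: word_equiv_mul_normal.
have loop_rp := is_loop_rev (is_loop_sym_loop (p := p) valid_p).
apply: rst_trans (word_equiv_ctx [::] [:: pos (normal_symbol (eval_word w))]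
                                 (word_equiv_inv_normal (p := p) valid_p)) _.
apply: rst_trans (word_equiv_mul_normal (valid_normal_symbol loop_rp) loop_w) _.
rewrite [eval_word (_ :: _)]/= -[letter_loop _]/(rev (sym_loop p)).
case: (rev (sym_loop p)) loop_rp => [/is_loop_nil //|x0 xs] loop_rp.
rewrite /normal_symbol (@loop_coefs_equiv _ (cat_loop (x0 :: xs) (eval_word w))).
  exact: rst_refl.
by rewrite /cat_loop; apply: Forall2_cat (normal_symbol_equiv loop_rp) _; apply: seq_equiv_refl.
Qed.

Lemma word_equiv_of_loop_equiv w1 w2 : valid_word w1 -> valid_word w2 ->
  loop_equiv (eval_word w1) (eval_word w2) -> word_equiv w1 w2.
Proof.
move=> valid1 valid2 /loop_equiv_normal_symbol e12.
apply: rst_trans (word_equiv_normal valid1) _.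
exact: rst_trans e12 (word_equiv_sym (word_equiv_normal valid2)).
Qed.

(** * The relations in the edge-path group *)

Lemma Bequiv_inB M N : Bequiv M N -> inB N = inB M.
Proof.
case=> D BD ->; apply/idP/idP; first exact: inB_cancel.
exact: inB_mul.
Qed.

Lemma valid_sym_zero_end X s a :
  valid_sym (X, s ++ [:: a; 0]) -> valid_sym (X, s).
Proof.
case/andP => /= BX; rewrite /valid_sym /= BX Eprod_cat /= Estep_zero.
exact/inB_cancel/inB_mx2_neg.
Qed.

Lemma valid_sym_zero_mid X s a b t :
  valid_sym (X, s ++ [:: a; 0; b] ++ t) -> valid_sym (X, s ++ [:: a + b] ++ t).
Proof.
case/andP => /= BX; rewrite /valid_sym /= BX !Eprod_cat /= Estep_zero_mid.
by rewrite (Bequiv_inB (foldl_Estep_bprime _ t (inB_mx2_neg 0))) bprime_neg1.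
Qed.

Lemma valid_sym_unit_end X s a u : u \is a GRing.unit ->
  valid_sym (X, s ++ [:: a; u]) -> valid_sym (X, s ++ [:: a - u^-1]).
Proof.
move=> u_unit /andP[/= BX]; rewrite /valid_sym /= BX !Eprod_cat /= Estep_unit //.
exact/inB_cancel/inB_mx2_unit.
Qed.

Lemma valid_sym_unit_mid X s a u b t : u \is a GRing.unit ->
  valid_sym (X, s ++ [:: a; u; b] ++ t) ->
  valid_sym (X, s ++ [:: a - u^-1; u ^+ 2 * b - u] ++ alt false u t).
Proof.
move=> u_unit /andP[/= BX]; rewrite /valid_sym /= BX !Eprod_cat /=.
rewrite -[foldl _ _ t]/(foldl Estep _ (b :: t)) Estep_unit //.
rewrite (Bequiv_inB (foldl_Estep_bprime _ _ (inB_mx2_unit u_unit))) /= !mx2E.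
by rewrite mulN1r.
Qed.

Lemma valid_rel_pair w1 w2 : rel_pair w1 w2 -> valid_word w1 /\ valid_word w2.
Proof.
case=> [b p | X s Y t | X | X s a | X s a b t | X s a u u_unit | X s a u b t u_unit] valid;
  rewrite /valid_word /= ?andbT ?valid //.
- by move=> valid'; rewrite valid' valid_sym_mul.
- by rewrite /valid_sym /= valid inB1.
- by split => //; apply: valid_sym_zero_end valid.
- by split => //; apply: valid_sym_zero_mid valid.
- by split => //; apply: valid_sym_unit_end valid.
- by split => //; apply: valid_sym_unit_mid valid.
Qed.

Lemma loop_move_back x0 xs y z ys : rows_equiv (last x0 xs) z ->
  loop_move ((x0 :: xs) ++ [:: y; z] ++ ys) ((x0 :: xs) ++ ys).
Proof. by move=> xz; rewrite lastI -cats1 -!catA; apply: lm_back. Qed.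

Lemma loop_move_triangle x0 xs y z ys : adjacent (last x0 xs) y -> adjacent y z ->
  adjacent (last x0 xs) z ->
  loop_move ((x0 :: xs) ++ [:: y; z] ++ ys) ((x0 :: xs) ++ z :: ys).
Proof. by move=> xy yz xz; rewrite lastI -cats1 -!catA; apply: lm_simplex. Qed.

Lemma loop_equiv_move_equiv xs ys zs : is_loop xs -> is_loop zs ->
  loop_move xs ys -> seq_equiv ys zs -> loop_equiv xs zs.
Proof.
move=> loop_xs loop_zs xys yzs; have loop_ys := is_loop_equiv loop_zs (seq_equiv_sym yzs).
apply: rst_trans (loop_equiv_move loop_xs loop_ys xys) _.
exact: loop_equiv_seq_equiv loop_ys yzs.
Qed.

Lemma loop_move_catl L xs ys : is_loop L -> is_loop xs -> loop_move xs ys ->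
  cat_loop L xs = cat_loop L ys \/ loop_move (cat_loop L xs) (cat_loop L ys).
Proof.
case: L => [/is_loop_nil //|x0 L] /is_loopP[_ inf_last _ _] loop_xs xys.
case: xys loop_xs => [[|? l] r x y xy | [|? l] r x y z xz | [|? l] r x y z xy yz xz]
  /= /is_loopP[inf_x _ _ _]; [by left | right; rewrite /cat_loop /= ?catA -!cat_cons ..].
- exact: lm_rep.
- apply: loop_move_back.
  exact: rows_equiv_trans inf_last (rows_equiv_trans (rows_equiv_sym inf_x) xz).
- exact: lm_back.
- have lastx := rows_equiv_trans inf_last (rows_equiv_sym inf_x).
  by apply: loop_move_triangle; rewrite -?(adjacent_equivl _ lastx).
- exact: lm_simplex.
Qed.

Lemma loop_equiv_catl L xs ys : is_loop L -> loop_equiv xs ys ->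
  loop_equiv (cat_loop L xs) (cat_loop L ys).
Proof.
move=> loop_L.
elim=> [xs' ys' [loop_xs loop_ys xys] | xs' | xs' ys' _ IH | xs' ys' zs' _ IH1 _ IH2].
- have [-> | move] := loop_move_catl loop_L loop_xs xys; first exact: rst_refl.
  exact: loop_equiv_move (is_loop_cat loop_L loop_xs) (is_loop_cat loop_L loop_ys) move.
- exact: rst_refl.
- exact: rst_sym.
- exact: rst_trans IH1 IH2.
Qed.

Lemma sym_loop_bprime Z T t : inB Z ->
  seq_equiv (sym_loop (T, bprime Z t)) (sym_loop (Z *m T, t)).
Proof.
move=> BZ; constructor; last exact: scanl_Estep_bprime.
by apply: Bequiv_inf_act; exists Z.
Qed.

Lemma sym_loop_cat X s m :
  sym_loop (X, s ++ m) = cat_loop (sym_loop (X, s)) (sym_loop (foldl Estep X s, m)).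
Proof. by rewrite !sym_loopE /cat_loop scanl_cat map_cat. Qed.

Lemma last_sym_loop X s :
  last (inf_act X) (map inf_act (scanl Estep X s)) = inf_act (foldl Estep X s).
Proof. by rewrite last_map last_scanl_Estep. Qed.

(* Relations (3) and (4) are realized by one backtrack, resp. triangle, move where
   the symbol's path leaves [oo . T], followed by a change of representatives. *)
Lemma loop_equiv_zero_rel X s a m1 m2 E : is_loop E ->
  valid_sym (X, s ++ a :: 0 :: m1) -> valid_sym (X, s ++ m2) ->
  seq_equiv (behead (sym_loop (Estep (Estep (foldl Estep X s) a) 0, m1)))
            (behead (sym_loop (foldl Estep X s, m2))) ->
  loop_equiv (cat_loop (sym_loop (X, s ++ a :: 0 :: m1)) E)
             (cat_loop (sym_loop (X, s ++ m2)) E).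
Proof.
move=> loop_E valid1 valid2 local.
have loop1 := is_loop_cat (is_loop_sym_loop valid1) loop_E.
have loop2 := is_loop_cat (is_loop_sym_loop valid2) loop_E.
rewrite !sym_loop_cat in loop1 loop2 *; set T := foldl Estep X s in loop1 loop2 local *.
apply: (loop_equiv_move_equiv loop1 loop2
  (ys := sym_loop (X, s) ++ behead (sym_loop (Estep (Estep T a) 0, m1)) ++ behead E)).
- have Tz : rows_equiv (inf_act T) (inf_act (Estep (Estep T a) 0)).
    rewrite Estep_zero; apply: Bequiv_inf_act.
    by exists (mx2 (-1) 0 (- a) (-1)); rewrite ?inB_mx2_neg.
  rewrite -last_sym_loop -/T in Tz.
  have back := loop_move_back (inf_act (Estep T a))
                 (behead (sym_loop (Estep (Estep T a) 0, m1)) ++ behead E) Tz.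
  by rewrite /cat_loop -catA sym_loopE.
- rewrite /cat_loop -catA; apply: Forall2_cat; first exact: seq_equiv_refl.
  by apply: Forall2_cat local _; apply: seq_equiv_refl.
Qed.

Lemma loop_equiv_unit_rel X s a u m1 m2 E : is_loop E -> u \is a GRing.unit ->
  valid_sym (X, s ++ a :: u :: m1) -> valid_sym (X, s ++ m2) ->
  seq_equiv (sym_loop (Estep (Estep (foldl Estep X s) a) u, m1))
            (behead (sym_loop (foldl Estep X s, m2))) ->
  loop_equiv (cat_loop (sym_loop (X, s ++ a :: u :: m1)) E)
             (cat_loop (sym_loop (X, s ++ m2)) E).
Proof.
move=> loop_E u_unit valid1 valid2 local.
have loop1 := is_loop_cat (is_loop_sym_loop valid1) loop_E.
have loop2 := is_loop_cat (is_loop_sym_loop valid2) loop_E.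
have T_unit : foldl Estep X s \in unitmx.
  by case/andP: valid1 => /inB_unitmx /foldl_Estep_unitmx.
rewrite !sym_loop_cat in loop1 loop2 *; set T := foldl Estep X s in loop1 loop2 local T_unit *.
apply: (loop_equiv_move_equiv loop1 loop2
  (ys := sym_loop (X, s) ++ sym_loop (Estep (Estep T a) u, m1) ++ behead E)).
- have Ty := adjacent_Estep a T_unit.
  have yz := adjacent_Estep u (Estep_unitmx a T_unit).
  have Tz : adjacent (inf_act T) (inf_act (Estep (Estep T a) u)) by rewrite adjacent_Estep2.
  rewrite -last_sym_loop -/T in Ty Tz.
  have triangle := loop_move_triangle (behead (sym_loop (Estep (Estep T a) u, m1)) ++ behead E)
                     Ty yz Tz.
  by rewrite /cat_loop -catA sym_loopE.
- rewrite /cat_loop -catA; apply: Forall2_cat; first exact: seq_equiv_refl.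
  by apply: Forall2_cat local _; apply: seq_equiv_refl.
Qed.

Lemma loop_equiv_cancel (l : bool * symbol A) E : valid_sym l.2 -> is_loop E ->
  loop_equiv (cat_loop (letter_loop l) (cat_loop (letter_loop (~~ l.1, l.2)) E)) E.
Proof.
case: l => b p /= valid_p loop_E.
have -> : letter_loop (~~ b, p) = rev (letter_loop (b, p)).
  by case: b; rewrite /letter_loop /= ?revK.
case: (letter_loop (b, p)) (is_loop_letter (l := (b, p)) valid_p) => [/is_loop_nil //|x0 xs].
case/is_loopP => inf_x0 _ unimod adj.
have := loop_equiv_there_and_back inf_x0 adj unimod loop_E.
by rewrite /cat_loop [rev (_ :: _)]rev_lastI.
Qed.

Lemma loop_equiv_mul X s Y t E : valid_sym (X, s) -> valid_sym (Y, t) -> is_loop E ->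
  loop_equiv (cat_loop (sym_loop (X, s)) (cat_loop (sym_loop (Y, t)) E))
             (cat_loop (sym_loop (X, s ++ bprime (Zmat Y X s) t)) E).
Proof.
move=> valid1 valid2 loop_E.
apply: loop_equiv_seq_equiv.
  exact: is_loop_cat (is_loop_sym_loop valid1) (is_loop_cat (is_loop_sym_loop valid2) loop_E).
case/andP: valid1 => /= BX Bs; case/andP: valid2 => /= BY _.
have := sym_loop_bprime (foldl Estep X s) t (inB_Zmat BX Bs BY).
rewrite Zmat_mul ?inB_unitmx // => /Forall2_consE[_ tail].
rewrite sym_loop_cat /cat_loop -catA; apply: Forall2_cat; first exact: seq_equiv_refl.
by apply: Forall2_cat; [exact: seq_equiv_sym tail | exact: seq_equiv_refl].
Qed.

Lemma loop_equiv_triv X E : inB X -> is_loop E -> loop_equiv (cat_loop (sym_loop (X, [::])) E) E.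
Proof.
move=> BX loop_E; have valid_X : valid_sym (X, [::]) by rewrite /valid_sym /= BX inB1.
apply: loop_equiv_seq_equiv (is_loop_cat (is_loop_sym_loop valid_X) loop_E) _.
case: E loop_E => [/is_loop_nil //|e0 E] /is_loopP[inf_e0 _ _ _].
constructor; last exact: seq_equiv_refl.
exact: rows_equiv_trans (inf_act_inB BX) (rows_equiv_sym inf_e0).
Qed.

Lemma eval_cons l w : eval_word (l :: w) = cat_loop (letter_loop l) (eval_word w).
Proof. by []. Qed.

Lemma letter_loop_pos p : letter_loop (pos p) = sym_loop p.
Proof. by []. Qed.

Lemma loop_equiv_rel_pair w1 w2 r : rel_pair w1 w2 -> valid_word r ->
  loop_equiv (eval_word (w1 ++ r)) (eval_word (w2 ++ r)).
Proof.
move=> w12 valid_r; have := is_loop_eval valid_r.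
case: w12 => [b p valid_p | X s Y t valid1 valid2 | X BX | X s a valid | X s a b t valid
             | X s a u u_unit valid | X s a u b t u_unit valid];
  rewrite ?cat_cons ?cat0s !eval_cons ?letter_loop_pos; move: (eval_word r) => E loop_E.
- exact: loop_equiv_cancel (b, p) E valid_p loop_E.
- exact: loop_equiv_mul.
- exact: loop_equiv_triv.
- have valid' : valid_sym (X, s ++ [::]) by rewrite cats0; apply: valid_sym_zero_end valid.
  have local : seq_equiv [::] [::] by [].
  by have := loop_equiv_zero_rel loop_E valid valid' local; rewrite cats0.
- set T := foldl Estep X s.
  have local : seq_equiv (sym_loop (Estep (Estep (Estep T a) 0) b, t))
                         (sym_loop (Estep T (a + b), t)).
    rewrite Estep_zero_mid; apply: seq_equiv_sym.
    by have := sym_loop_bprime (Estep T (a + b)) t (inB_mx2_neg 0); rewrite bprime_neg1.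
  exact: loop_equiv_zero_rel loop_E valid (valid_sym_zero_mid valid) local.
- set T := foldl Estep X s.
  have local : seq_equiv (sym_loop (Estep (Estep T a) u, [::]))
                         (sym_loop (Estep T (a - u^-1), [::])).
    by rewrite Estep_unit //; apply/seq_equiv_sym/(sym_loop_bprime _ [::] (inB_mx2_unit u_unit)).
  exact: loop_equiv_unit_rel loop_E u_unit valid (valid_sym_unit_end u_unit valid) local.
- set T := foldl Estep X s.
  have local : seq_equiv (sym_loop (Estep (Estep T a) u, b :: t))
                         (sym_loop (Estep T (a - u^-1), (u ^+ 2 * b - u) :: alt false u t)).
    rewrite Estep_unit //; apply: seq_equiv_sym.
    have := sym_loop_bprime (Estep T (a - u^-1)) (b :: t) (inB_mx2_unit u_unit).
    by rewrite [bprime _ _]/= !mx2E mulN1r.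
  exact: loop_equiv_unit_rel loop_E u_unit valid (valid_sym_unit_mid u_unit valid) local.
Qed.

Lemma loop_equiv_eval_catl l w1 w2 : valid_word l ->
  loop_equiv (eval_word w1) (eval_word w2) ->
  loop_equiv (eval_word (l ++ w1)) (eval_word (l ++ w2)).
Proof.
elim: l => // x l IH /andP[valid_x valid_l] e12; rewrite !cat_cons !eval_cons.
exact: loop_equiv_catl (is_loop_letter valid_x) (IH valid_l e12).
Qed.

Lemma valid_word_step w1 w2 : word_step w1 w2 -> valid_word w1 = valid_word w2.
Proof.
case=> l [r [u [v [uv [-> ->]]]]]; have [valid_u valid_v] := valid_rel_pair uv.
by rewrite /valid_word !all_cat -/(valid_word u) -/(valid_word v) valid_u valid_v.
Qed.

Lemma loop_equiv_word_step w1 w2 : word_step w1 w2 -> valid_word w1 ->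
  loop_equiv (eval_word w1) (eval_word w2).
Proof.
case=> l [r [u [v [uv [-> ->]]]]]; rewrite /valid_word !all_cat => /and3P[valid_l _ valid_r].
exact: loop_equiv_eval_catl valid_l (loop_equiv_rel_pair uv valid_r).
Qed.

Lemma valid_word_equiv w1 w2 : word_equiv w1 w2 -> valid_word w1 = valid_word w2.
Proof. by elim=> [? ? /valid_word_step | | ? ? _ -> | ? ? ? _ -> _ ->]. Qed.

Lemma loop_equiv_of_word_equiv w1 w2 : word_equiv w1 w2 -> valid_word w1 ->
  loop_equiv (eval_word w1) (eval_word w2).
Proof.
elim=> [? ? /loop_equiv_word_step // | ? _ | x y xy IH valid_y | x y z xy IH1 _ IH2 valid_x].
- exact: rst_refl.
- by apply: rst_sym; apply: IH; rewrite (valid_word_equiv xy).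
- by apply: rst_trans (IH1 valid_x) (IH2 _); rewrite -(valid_word_equiv xy).
Qed.

End Presentation.

Theorem theorem6p1 (A : comUnitRingType) :
  (forall s : seq 'rV[A]_2, is_loop s ->
     exists w : word A, valid_word w /\ loop_equiv s (eval_word w)) /\
  (forall w1 w2 : word A, valid_word w1 -> valid_word w2 ->
     (loop_equiv (eval_word w1) (eval_word w2) <-> word_equiv w1 w2)).
Proof.
split=> [s loop_s | w1 w2 valid1 valid2].
- exists [:: pos (normal_symbol s)]; split; last exact: loop_equiv_normal.
  by rewrite /valid_word /= valid_normal_symbol.
- split; first exact: word_equiv_of_loop_equiv.
  by move/loop_equiv_of_word_equiv; apply.
Qed.
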